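(* Let $r:\mathbb{R}_+\to\mathbb{R}_+$ be concave and strictly increasing with $r(z)<1/2$ for all $z\in\mathbb{R}_+$. For each integer $i\ge1$ let $C^i\subseteq\mathbb{R}^n$ be a closed convex set with $\mathbf 0\in C^i$ and \[ \Big\{\mathbf x\in\mathbb{R}^n:\ \|\mathbf x\|_2\le\tfrac{r(i-1)+r(i+1)}{2}\Big\}\subseteq C^i\subseteq\{\mathbf x\in\mathbb{R}^n:\ \|\mathbf x\|_2\le r(i)\}. \] Then $S=\bigcup_{i=1}^\infty\big(C^i+i\,\mathbf e(1)\big)$ is a rational MICP representable set, and the sets $C^i+i\,\mathbf e(1)$, $i\ge1$, are pairwise disjoint.
   Context: $\mathbf e(1)$ denotes the first standard unit vector of $\mathbb{R}^n$. A set $S\subseteq\mathbb{R}^n$ is MICP representable if there is a closed convex $M\subseteq\mathbb{R}^{n+p+d}$ (variables $(\mathbf x,\mathbf y,\mathbf z)$, $\mathbf x\in\mathbb{R}^n,\mathbf y\in\mathbb{R}^p,\mathbf z\in\mathbb{R}^d$) such that $\mathbf x\in S$ iff there exist $\mathbf y\in\mathbb{R}^p$, $\mathbf z\in\mathbb{Z}^d$ with $(\mathbf x,\mathbf y,\mathbf z)\in M$. It is rational MICP representable if such an $M$ exists with $\operatorname{proj}_{\mathbf z}(M)$ rationally unbounded, where $I\subseteq\mathbb{R}^d$ is rationally unbounded if for every image $I'\subseteq\mathbb{R}^{d'}$ of $I$ under a rational affine map, either $I'$ is bounded or its recession cone $I'_\infty=\{\mathbf r:\ \mathbf x+\lambda\mathbf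 r\in I'\ \forall\mathbf x\in I',\lambda\ge0\}$ contains a nonzero integer vector. *)

From HB Require Import structures.
From mathcomp Require Import all_boot all_order all_algebra.
From mathcomp Require Import all_classical all_reals all_analysis.
Set Implicit Arguments. Unset Strict Implicit. Unset Printing Implicit Defensive.
Import Order.TTheory GRing.Theory Num.Theory.
Import numFieldNormedType.Exports.
Local Open Scope ring_scope.
Local Open Scope classical_set_scope.

Section Defs.
Variable R : realType.

Definition int_vec k (z : 'rV[R]_k) : Prop := forall j, z 0 j \is a Num.int.

Definition norm2 k (x : 'rV[R]_k) : R := Num.sqrt (\sum_j x 0 j ^+ 2).

(* first standard unit vector e(1) (index 0 in Rocq) *)
Definition e1 k : 'rV[R]_k := \row_(j < k) (nat_of_ord j == 0%N)%:R.

Definition bounded_vset k (A : set 'rV[R]_k) : Prop :=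
  exists M : R, forall x, A x -> forall j, `|x 0 j| <= M.

Definition recession_cone k (A : set 'rV[R]_k) : set 'rV[R]_k :=
  [set r | forall x (lam : R), A x -> 0 <= lam -> A (x + lam *: r)].

Definition rat_affine_image d d' (A : 'M[rat]_(d, d')) (b : 'rV[rat]_d')
  (I : set 'rV[R]_d) : set 'rV[R]_d' :=
  [set z *m map_mx ratr A + map_mx ratr b | z in I].

Definition rationally_unbounded d (I : set 'rV[R]_d) : Prop :=
  forall d' (A : 'M[rat]_(d, d')) (b : 'rV[rat]_d'),
    let I' := rat_affine_image A b I in
    bounded_vset I' \/ exists r, recession_cone I' r /\ r != 0 /\ int_vec r.

Definition xyz n p d (x : 'rV[R]_n) (y : 'rV[R]_p) (z : 'rV[R]_d)
  : 'rV[R]_(n + p + d) := row_mx (row_mx x y) z.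

Definition proj_z n p d (M : set 'rV[R]_(n + p + d)) : set 'rV[R]_d :=
  [set z | exists x y, M (xyz x y z)].

Definition MICP_representation n p d (S : set 'rV[R]_n)
  (M : set 'rV[R]_(n + p + d)) : Prop :=
  closed M /\ convex_set M /\
  forall x, S x <-> exists y z, int_vec z /\ M (xyz x y z).

Definition MICP_representable n (S : set 'rV[R]_n) : Prop :=
  exists p d (M : set 'rV[R]_(n + p + d)), MICP_representation S M.

Definition rational_MICP_representable n (S : set 'rV[R]_n) : Prop :=
  exists p d (M : set 'rV[R]_(n + p + d)),
    MICP_representation S M /\ rationally_unbounded (proj_z M).

End Defs.

From HB Require Import structures.
From mathcomp Require Import all_boot all_order all_algebra.
From mathcomp Require Import all_classical all_reals all_analysis.
From mathcomp Require Import ring lra.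
Import Order.TTheory GRing.Theory Num.Theory.
Import numFieldNormedType.Exports.
Local Open Scope ring_scope.
Local Open Scope classical_set_scope.

Set Implicit Arguments.
Unset Strict Implicit.
Unset Printing Implicit Defensive.

(* Write S = U_{i>=1} (C_i + i e1) and, for k >= 1, let rho_k be the inner
   radius (r(k-1) + r(k+1))/2 of C_k.  Let L_k be the secant line of r through
   (k-1, r(k-1)) and (k+1, r(k+1)), so L_k(k) = rho_k; by concavity of r,
   r(j) <= L_k(j) at every integer j outside ]k-1, k+1[.  With one integer
   variable z and no continuous auxiliary variable we take
     M = { (x, z) : z >= 1 and (rho_k / L_k(z)) (x - z e1) \in C_k  for all k >= 1 }.
   M is closed (an intersection of preimages of closed sets under continuous
   maps) and convex (each constraint is the perspective of the convex set C_k
   along the affine, positive function L_k).  For integer z = i, the constraint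
   for k = i says x - i e1 \in C_i, and for k <> i it is implied by it: a point
   of C_i has norm <= r(i) <= L_k(i), so its rescaling has norm <= rho_k.  Its projection on z is the ray [1, +oo[, which is
   rationally unbounded.  Disjointness of the translates follows from
   C_i lying in the open ball of radius 1/2. *)

Lemma convex_setP (R : numDomainType) (E : lmodType R) (A : set E) :
  convex_set A <->
  forall x y (t : R), 0 <= t -> t <= 1 -> A x -> A y -> A (t *: x + (1 - t) *: y).
Proof.
split=> [cA x y t t0 t1 Ax Ay | cA x y t].
  by have := cA x y (Itv01 t0 t1); rewrite !inE; apply.
by rewrite !inE => Ax Ay; apply: cA; rewrite ?ge0 ?le1.
Qed.

Section EuclideanNorm.
Variables (R : realType) (n : nat).

Lemma norm2Z (a : R) (x : 'rV[R]_n) : norm2 (a *: x) = `|a| * norm2 x.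
Proof.
rewrite /norm2 (eq_bigr (fun j => a ^+ 2 * x 0 j ^+ 2)); last first.
  by move=> j _; rewrite mxE exprMn.
by rewrite -mulr_sumr sqrtrM ?sqr_ge0 // sqrtr_sqr.
Qed.

Lemma norm2_coord (x : 'rV[R]_n) j : `|x 0 j| <= norm2 x.
Proof.
rewrite /norm2 -sqrtr_sqr ler_sqrt; last by rewrite sumr_ge0 // => i _; rewrite sqr_ge0.
by rewrite (bigD1 j) //= lerDl sumr_ge0 // => i _; rewrite sqr_ge0.
Qed.

Lemma translates_disjoint (hn : (0 < n)%N) (c c' : 'rV[R]_n) (i j : nat) :
  norm2 c < 2^-1 -> norm2 c' < 2^-1 ->
  c + i%:R *: e1 R n = c' + j%:R *: e1 R n -> i = j.
Proof.
move=> hc hc' e; pose o : 'I_n := Ordinal hn.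
have := congr1 (fun v : 'rV[R]_n => v 0 o) e; rewrite !mxE /= !mulr1.
have := le_lt_trans (norm2_coord c o) hc.
have := le_lt_trans (norm2_coord c' o) hc'.
rewrite !ltr_norml => /andP[? ?] /andP[? ?] ?.
have [ij|ji|//] := ltngtP i j; exfalso.
- have : i%:R + 1 <= j%:R :> R by rewrite natr1 ler_nat.
  lra.
- have : j%:R + 1 <= i%:R :> R by rewrite natr1 ler_nat.
  lra.
Qed.

End EuclideanNorm.

Lemma intr_mul_ratr_int (R : archiRealFieldType) (m : int) (q : rat) :
  (denq q %| m)%Z -> (m%:~R * ratr q : R) \is a Num.int.
Proof.
move=> /dvdzP [c ->].
have -> : (c * denq q)%:~R * ratr q = ratr ((c * numq q)%:~R) :> R.
  rewrite ratr_int !intrM.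
  have := congr1 (@ratr R) (numqE q); rewrite rmorphM /= !ratr_int => ->; ring.
by rewrite ratr_int intr_int.
Qed.

(* A subset of R closed under adding nonnegative reals is rationally
   unbounded: a rational affine image of it is either a single point (zero
   linear part) or has as recession direction a clearing of denominators of
   the linear part. *)
Lemma upward_rationally_unbounded (R : realType) (I : set 'rV[R]_1) :
  (forall z lam, I z -> 0 <= lam -> I (z + const_mx lam)) -> rationally_unbounded I.
Proof.
move=> upI d' A b I'.
have [A0|An0] := eqVneq A 0.
  left; exists (\sum_j `|(map_mx ratr b : 'rV[R]_d') 0 j|).
  move=> x [z _ <-] j.
  have -> : (z *m map_mx ratr A + map_mx ratr b) 0 j = (map_mx ratr b : 'rV[R]_d') 0 j.
    by rewrite !mxE big1 ?add0r // => k _; rewrite A0 !mxE rmorph0 mulr0.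
  by rewrite (bigD1 j) //= lerDl sumr_ge0.
right.
pose m : int := \prod_(j < d') denq (A 0 j).
have m0 : 0 < m by apply: prodr_gt0 => j _; exact: denq_gt0.
exists (m%:~R *: map_mx ratr A); split; [|split].
- move=> x lam [z Iz <-] lam0; exists (z + const_mx (lam * m%:~R)).
    by apply: upI; rewrite // mulr_ge0 // ler0z ltW.
  by apply/rowP => j; rewrite !mxE !big_ord1 !mxE; ring.
- apply: contra An0 => /eqP H; apply/eqP/matrixP => i j.
  have := congr1 (fun M : 'M[R]_(1,d') => M i j) H; rewrite !mxE => /eqP.
  by rewrite mulf_eq0 intr_eq0 gt_eqF //= fmorph_eq0 => /eqP ->.
- move=> j; rewrite !mxE; apply: intr_mul_ratr_int.
  by rewrite /m (bigD1 j) //= dvdz_mulr.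
Qed.

Lemma int_ge1_nat (R : archiNumDomainType) (a : R) : a \is a Num.int -> 1 <= a -> exists2 i, (1 <= i)%N & a = i%:R.
Proof.
move=> ai a1; move: ai; rewrite intrEge0 ?(le_trans ler01 a1) // => /natrP [i ei].
by exists i => //; move: a1; rewrite ei ler1n.
Qed.

Section SecantLines.
Variables (R : realType) (r : R -> R).
Hypothesis r_nonneg : forall z, 0 <= z -> 0 <= r z.
Hypothesis r_incr : forall z w, 0 <= z -> z < w -> r z < r w.
Hypothesis r_concave : forall z w (t : R), 0 <= z -> 0 <= w -> 0 <= t -> t <= 1 ->
      t * r z + (1 - t) * r w <= r (t * z + (1 - t) * w).

Lemma concave_chord x y w : 0 <= x -> x <= y -> y <= w ->
  (w - y) * r x + (y - x) * r w <= (w - x) * r y.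
Proof.
move=> x0 xy yw.
have [xw|xw] := eqVneq x w.
  have yx : y = x by apply/eqP; rewrite eq_le; apply/andP; split; lra.
  by rewrite yx xw !subrr !mul0r addr0.
have wx : 0 < w - x by rewrite subr_gt0 lt_neqAle xw (le_trans xy yw).
pose t := (w - y) / (w - x).
have ew : w - y = t * (w - x) by rewrite divfK // gt_eqF.
have t0 : 0 <= t by rewrite divr_ge0 //; lra.
have t1 : t <= 1 by rewrite ler_pdivrMr // mul1r; lra.
have ey : t * x + (1 - t) * w = y.
  suff : w - y = w - (t * x + (1 - t) * w) by lra.
  by rewrite ew; ring.
have ex : y - x = (1 - t) * (w - x) by lra.
have := @r_concave x w t x0 (le_trans x0 (le_trans xy yw)) t0 t1; rewrite ey => concave_at_y.
have -> : (w - y) * r x + (y - x) * r w = (w - x) * (t * r x + (1 - t) * r w).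
  by rewrite ew ex; ring.
by rewrite ler_pM2l.
Qed.

Definition rho k := (r (k.-1)%:R + r (k.+1)%:R) / 2.
Definition slope k := (r (k.+1)%:R - r (k.-1)%:R) / 2.

(* The secant line of r through (k-1, r(k-1)) and (k+1, r(k+1)). *)
Definition secant k (z : R) := rho k + (z - k%:R) * slope k.

Lemma slope_gt0 k : 0 < slope k.
Proof.
rewrite /slope divr_gt0 // subr_gt0; apply: r_incr => //.
by rewrite ltr_nat; case: k => //= k; rewrite ltnS.
Qed.

Lemma rho_gt0 k : 0 < rho k.
Proof.
have := slope_gt0 k; have := @r_nonneg _ (ler0n R k.-1).
rewrite /rho /slope => *; lra.
Qed.

Lemma secant_kk k : secant k k%:R = rho k.
Proof. by rewrite /secant subrr mul0r addr0. Qed.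

Lemma secant_le k z w : z <= w -> secant k z <= secant k w.
Proof. by move=> zw; rewrite lerD2l ler_wpM2r ?(ltW (slope_gt0 k)) // lerB. Qed.

Lemma secant_affine k t z w :
  secant k (t * z + (1 - t) * w) = t * secant k z + (1 - t) * secant k w.
Proof. rewrite /secant; ring. Qed.

Lemma r_le_secant k j : (1 <= k)%N -> (j + 1 <= k)%N \/ (k + 1 <= j)%N ->
  r j%:R <= secant k j%:R.
Proof.
case: k => // k _; rewrite /secant /rho /slope /= => jk.
have eS : k.+1%:R = k%:R + 1 :> R by rewrite -natr1.
have eSS : k.+2%:R = k%:R + 2 :> R by rewrite -natr1 eS; ring.
have kk2 : k%:R <= k%:R + 2 :> R by lra.
rewrite eS eSS; case: jk => jk.
- have jk' : j%:R <= k%:R :> R by rewrite ler_nat -ltnS -addn1.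
  have := @concave_chord j%:R k%:R (k%:R + 2) (ler0n _ _) jk' kk2.
  nra.
- have jk' : k%:R + 2 <= j%:R :> R by rewrite -eSS ler_nat -addn1.
  have := @concave_chord k%:R (k%:R + 2) j%:R (ler0n _ _) kk2 jk'.
  nra.
Qed.

Lemma secant_1_gt0 k : (1 <= k)%N -> 0 < secant k 1.
Proof.
case: k => // -[_|k _]; first by rewrite secant_kk rho_gt0.
have := @r_le_secant k.+2 1 isT (or_introl isT).
have := @r_incr 0 1 (lexx 0) ltr01; have := @r_nonneg 0 (lexx 0).
move=> *; lra.
Qed.

Lemma secant_gt0 k z : (1 <= k)%N -> 1 <= z -> 0 < secant k z.
Proof. by move=> k1 z1; exact: lt_le_trans (secant_1_gt0 k1) (secant_le k z1). Qed.

Section LiftedSet.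
Variables (n : nat) (C : nat -> set 'rV[R]_n).

(* A point v of R^(n+0+1) encodes (x, z); [shifted v] is x - z e1. *)
Definition zcoord (v : 'rV[R]_(n + 0 + 1)) : R := v 0 (rshift (n + 0) 0).
Definition shifted (v : 'rV[R]_(n + 0 + 1)) : 'rV[R]_n :=
  lsubmx (lsubmx v) - zcoord v *: e1 R n.

(* Rescaling factor rho_k / L_k(z); the denominator is clamped below by
   L_k(1) so that it stays positive and continuous for every real z. *)
Definition denom k (z : R) := Num.max (secant k z) (secant k 1).
Definition pullback k (v : 'rV[R]_(n + 0 + 1)) := (rho k / denom k (zcoord v)) *: shifted v.

Definition lifted_set :=
  [set v | 1 <= zcoord v /\ forall k, (1 <= k)%N -> C k (pullback k v)].

Lemma denom_gt0 k z : (1 <= k)%N -> 0 < denom k z.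
Proof. by move=> k1; rewrite /denom lt_max secant_1_gt0 ?orbT. Qed.

Lemma denom_secant k z : 1 <= z -> denom k z = secant k z.
Proof. by move=> z1; rewrite /denom max_l // secant_le. Qed.

Lemma denom_kk k : (1 <= k)%N -> denom k k%:R = rho k.
Proof. by move=> k1; rewrite denom_secant ?secant_kk // ler1n. Qed.

Lemma zcoord_xyz x (y : 'rV[R]_0) (z : 'rV[R]_1) : zcoord (xyz x y z) = z 0 0.
Proof. by rewrite /zcoord /xyz row_mxEr. Qed.

Lemma shifted_xyz x (y : 'rV[R]_0) (z : 'rV[R]_1) :
  shifted (xyz x y z) = x - z 0 0 *: e1 R n.
Proof. by rewrite /shifted zcoord_xyz /xyz !row_mxKl. Qed.

Lemma pullback_cont k : (1 <= k)%N -> continuous (pullback k).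
Proof.
move=> k1 v.
have zc_cont : continuous zcoord by exact: coord_continuous.
have sh_cont : continuous shifted.
  move=> u; apply: (@continuousB _ _ _ (fun v => lsubmx (lsubmx v))
                                      (fun v => zcoord v *: e1 R n)).
    by apply: continuous_comp; apply: continuous_lsubmx.
  by apply: continuousZr_tmp; exact: zc_cont.
apply: (@continuousZ _ _ _ (fun v => rho k / denom k (zcoord v)) shifted); last exact: sh_cont.
apply: (@continuousM _ _ (fun _ => rho k) (fun v => (denom k (zcoord v))^-1)).
  exact: cst_continuous.
apply: (@continuousV _ _ (fun v => denom k (zcoord v))); first by rewrite gt_eqF // denom_gt0.
apply: (@continuous_comp _ _ _ zcoord (fun z => denom k z) v); first exact: zc_cont.
apply: (@continuous_max R R (secant k) (fun _ => secant k 1)); last exact: cst_continuous.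
apply: continuousD; first exact: cst_continuous.
apply: continuousM; last exact: cst_continuous.
by apply: continuousB; [exact: cvg_id | exact: cvg_cst].
Qed.

Hypothesis C_closed : forall i, (1 <= i)%N -> closed (C i).

Lemma lifted_set_closed : closed lifted_set.
Proof.
have -> : lifted_set = zcoord @^-1` [set x | 1 <= x] `&`
   \bigcap_(k in [set k | (1 <= k)%N]) (pullback k @^-1` C k).
  by apply/seteqP; split => v /= [H1 H2]; split => // k /H2.
apply: closedI.
  by apply: preimage_closed; [move=> v _; exact: coord_continuous | exact: closed_ge].
apply: closed_bigI => k k1.
by apply: preimage_closed; [move=> v _; exact: pullback_cont | exact: C_closed].
Qed.

Lemma zcoord_conv t v1 v2 :
  zcoord (t *: v1 + (1 - t) *: v2) = t * zcoord v1 + (1 - t) * zcoord v2.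
Proof. by rewrite /zcoord !mxE. Qed.

Lemma shifted_conv t v1 v2 :
  shifted (t *: v1 + (1 - t) *: v2) = t *: shifted v1 + (1 - t) *: shifted v2.
Proof. by rewrite /shifted zcoord_conv; apply/rowP => j; rewrite !mxE; ring. Qed.

(* Perspective identity: on z >= 1 the pullback maps a convex combination
   with weight t to a convex combination of the pullbacks, with the weight
   reweighted by the (affine, positive) secant values. *)
Lemma pullback_conv k t v1 v2 : (1 <= k)%N -> 0 <= t -> t <= 1 ->
  1 <= zcoord v1 -> 1 <= zcoord v2 ->
  let L1 := secant k (zcoord v1) in let L2 := secant k (zcoord v2) in
  let s := t * L1 / (t * L1 + (1 - t) * L2) in
  pullback k (t *: v1 + (1 - t) *: v2) = s *: pullback k v1 + (1 - s) *: pullback k v2.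
Proof.
move=> k1 t0 t1 z1 z2 L1 L2 s.
have L1p : 0 < L1 by exact: secant_gt0.
have L2p : 0 < L2 by exact: secant_gt0.
have Lp : 0 < t * L1 + (1 - t) * L2 by nra.
have es : 1 - s = (1 - t) * L2 / (t * L1 + (1 - t) * L2) by rewrite /s; field; rewrite gt_eqF.
rewrite es /s /pullback shifted_conv !denom_secant ?zcoord_conv //; last by nra.
rewrite secant_affine -/L1 -/L2 scalerDr !scalerA.
by congr (_ *: _ + _ *: _); field; rewrite ?gt_eqF ?rho_gt0.
Qed.

Hypothesis C_convex : forall i, (1 <= i)%N -> convex_set (C i).

Lemma lifted_set_convex : convex_set lifted_set.
Proof.
apply/convex_setP => v1 v2 t t0 t1 [z1 H1] [z2 H2]; split.
  by rewrite zcoord_conv; nra.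
move=> k k1; rewrite pullback_conv //.
have L1p : 0 < secant k (zcoord v1) by exact: secant_gt0.
have L2p : 0 < secant k (zcoord v2) by exact: secant_gt0.
apply: (proj1 (convex_setP _) (C_convex k1)); [| |exact: H1 k k1|exact: H2 k k1].
- by apply: divr_ge0; nra.
- by rewrite ler_pdivrMr ?mul1r; nra.
Qed.

Hypothesis C_inner : forall i, (1 <= i)%N -> forall x,
  norm2 x <= (r (i.-1)%:R + r (i.+1)%:R) / 2 -> C i x.
Hypothesis C_outer : forall i, (1 <= i)%N -> forall x, C i x -> norm2 x <= r i%:R.

(* A point of C_i, rescaled by rho_k / L_k(i), lies in C_k: this is the
   point where concavity of r enters, through r(i) <= L_k(i). *)
Lemma rescale_mem i c k : (1 <= i)%N -> (1 <= k)%N -> C i c ->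
  C k ((rho k / denom k i%:R) *: c).
Proof.
move=> i1 k1 Cc; have [->|ki] := eqVneq k i.
  by rewrite denom_kk // divff ?gt_eqF ?rho_gt0 // scale1r.
have i1R : 1 <= i%:R :> R by rewrite ler1n.
have Lp : 0 < secant k i%:R by exact: secant_gt0.
have r_le : r i%:R <= secant k i%:R.
  apply: r_le_secant => //.
  by case: (ltngtP i k) ki => // H _; [left | right]; rewrite addn1.
apply: C_inner => //; rewrite -/(rho k) norm2Z denom_secant //.
rewrite ger0_norm; last by rewrite divr_ge0 // ltW ?rho_gt0.
rewrite mulrAC ler_pdivrMr // ler_pM2l ?rho_gt0 //.
exact: le_trans (C_outer i1 Cc) r_le.
Qed.

Lemma lifted_set_represents x :
  (exists i, (1 <= i)%N /\ exists c, C i c /\ x = c + i%:R *: e1 R n) <->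
  exists (y : 'rV[R]_0) (z : 'rV[R]_1), int_vec z /\ lifted_set (xyz x y z).
Proof.
split=> [[i [i1 [c [Cc ->]]]] | [y [z [zi [z1 Hz]]]]].
  exists 0, (const_mx i%:R); split; first by move=> j; rewrite mxE natr_int.
  rewrite /lifted_set /= /pullback zcoord_xyz shifted_xyz mxE addrK ler1n.
  by split=> // k k1; exact: rescale_mem.
rewrite zcoord_xyz in z1; have [i i1 ei] := int_ge1_nat (zi 0) z1.
exists i; split=> //; exists (x - i%:R *: e1 R n); split; last by rewrite subrK.
have := Hz i i1; rewrite /pullback zcoord_xyz shifted_xyz ei denom_kk //.
by rewrite divff ?gt_eqF ?rho_gt0 // scale1r.
Qed.

Hypothesis C_0 : forall i, (1 <= i)%N -> C i 0.

Lemma proj_lifted_set (z : 'rV[R]_1) : proj_z lifted_set z <-> 1 <= z 0 0.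
Proof.
split=> [[x [y [z1 _]]] | z1]; first by rewrite zcoord_xyz in z1.
exists (z 0 0 *: e1 R n), 0; rewrite /lifted_set /= zcoord_xyz; split=> // k k1.
by rewrite /pullback shifted_xyz subrr scaler0; exact: C_0.
Qed.

Lemma proj_lifted_set_unbounded : rationally_unbounded (proj_z lifted_set).
Proof.
apply: upward_rationally_unbounded => z lam /proj_lifted_set z1 lam0.
by apply/proj_lifted_set; rewrite !mxE; lra.
Qed.

End LiftedSet.
End SecantLines.

Unset Implicit Arguments.

Theorem proposition2 (R : realType) (n : nat) (hn : (0 < n)%N)
  (r : R -> R)
  (r_nonneg : forall z, 0 <= z -> 0 <= r z)
  (r_lt_half : forall z, 0 <= z -> r z < 2^-1)
  (r_incr : forall z w, 0 <= z -> z < w -> r z < r w)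
  (r_concave : forall z w (t : R), 0 <= z -> 0 <= w -> 0 <= t -> t <= 1 ->
      t * r z + (1 - t) * r w <= r (t * z + (1 - t) * w))
  (C : nat -> set 'rV[R]_n)
  (C_closed : forall i, (1 <= i)%N -> closed (C i))
  (C_convex : forall i, (1 <= i)%N -> convex_set (C i))
  (C_0 : forall i, (1 <= i)%N -> C i 0)
  (C_inner : forall i, (1 <= i)%N -> forall x,
      norm2 x <= (r (i.-1)%:R + r (i.+1)%:R) / 2 -> C i x)
  (C_outer : forall i, (1 <= i)%N -> forall x, C i x -> norm2 x <= r i%:R) :
  let S := [set x | exists i, (1 <= i)%N /\ exists c, C i c /\ x = c + i%:R *: e1 R n] in
  rational_MICP_representable S /\
  (forall i j, (1 <= i)%N -> (1 <= j)%N -> i <> j -> forall x,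
     (exists c, C i c /\ x = c + i%:R *: e1 R n) ->
     (exists c, C j c /\ x = c + j%:R *: e1 R n) -> False).
Proof.
move=> S; split.
  exists 0%N, 1%N, (lifted_set r C); split; last exact: proj_lifted_set_unbounded.
  split; first exact: (lifted_set_closed r_nonneg r_incr r_concave C_closed).
  split; first exact: (lifted_set_convex r_nonneg r_incr r_concave C_convex).
  exact: lifted_set_represents.
move=> i j i1 j1 ij x [c [Cc ->]] [c' [Cc' e]]; apply: ij.
have in_half_ball k b : (1 <= k)%N -> C k b -> norm2 b < 2^-1.
  by move=> k1 Cb; exact: le_lt_trans (C_outer k k1 b Cb) (r_lt_half _ (ler0n _ k)).
exact: (translates_disjoint hn (in_half_ball i c i1 Cc) (in_half_ball j c' j1 Cc') e).
Qed.
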